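(* For every prime power $q$, the number $J_{\mathrm{H}}(q)$ of distinct $j$-invariants of Hessian curves over $\mathbb{F}_q$ is $$J_{\mathrm{H}}(q)=\begin{cases}q-1,& q\equiv0\pmod3,\\ \lfloor (q+11)/12\rfloor,& q\equiv1\pmod3,\\ \lfloor q/2\rfloor,& q\equiv2\pmod3.\end{cases}$$
   Context: For $u\in\mathbb{F}_q$ with $u^3\ne27$, the Hessian curve $E_{\mathrm{H},u}$ is the elliptic curve $X^3+Y^3+1=uXY$, with $j(E_{\mathrm{H},u})=\left(\frac{u(u^3+216)}{u^3-27}\right)^3$. $J_{\mathrm{H}}(q)=\#\{j(E_{\mathrm{H},u}): u\in\mathbb{F}_q,\ u^3\ne27\}$. *)

From HB Require Import structures.
From mathcomp Require Import all_boot all_order all_algebra all_field.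
Set Implicit Arguments. Unset Strict Implicit. Unset Printing Implicit Defensive.
Import GRing.Theory.
Local Open Scope ring_scope.

(* j-invariant of the Hessian curve X^3 + Y^3 + 1 = u X Y *)
Definition jHess (F : fieldType) (u : F) : F :=
  (u * (u ^+ 3 + 216%:R) / (u ^+ 3 - 27%:R)) ^+ 3.

Definition hess_ok (F : fieldType) (u : F) : bool := u ^+ 3 != 27%:R.

Definition J_H (F : finFieldType) : nat :=
  #|[set jHess u | u in [pred u : F | hess_ok u]]|.

Definition J_H_formula (q : nat) : nat :=
  (if q %% 3 == 0 then q - 1
  else if q %% 3 == 1 then (q + 11) %/ 12
  else q %/ 2)%N.

(* Write jHess u = f(u)^3 with f(u) = u (u^3 + 216) / (u^3 - 27), and let A be
   the set of admissible parameters (u^3 != 27).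
   - In characteristic 3, jHess u = u^3 and cubing is injective: J_H = q - 1.
   - Otherwise f(u) = f(v) iff (u - v) L_1(u, v) R(u, v) = 0, where
     L_z(u, v) = uv - 3z(u + v) - 18z^2 and R is a norm form that splits as
     L_w L_(w^2) over a primitive cube root of unity w.  The equation
     L_z(u, v) = 0 has the unique solution v = partner z u, admissible again.
   - If q = 2 mod 3, cubing is injective, so J_H = #|f(A)|; every fibre of f
     has two points, except {0} in characteristic 2, hence J_H = floor(q/2).
   - If q = 1 mod 3, the fibre of f through u is {u and its three partners}:
     four points off a set of at most 6 exceptional u, at least two points
     outside characteristic 2.  Since f(w u) = w f(u), cubing is 3-to-1 on
     f(A) \ {0}, so 3 J_H = 2 + #|f(A)|; counting f(A) by weighting each
     point with the inverse of its fibre size gives 4 #|f(A)| = q in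
     characteristic 2 and q - 3 <= 4 #|f(A)| <= q + 3 otherwise, which pins
     J_H down to floor((q + 11) / 12). *)

From mathcomp Require Import all_boot all_order all_algebra all_field.
From mathcomp Require Import ring zify.
Set Implicit Arguments. Unset Strict Implicit. Unset Printing Implicit Defensive.
Import Order.TTheory GRing.Theory Num.Theory.
Local Open Scope ring_scope.

Section Fibres.
Variables (T U : finType) (g : T -> U) (A : {set T}).

Definition fibre (x : T) : {set T} := [set y in A | g y == g x].

Lemma fibre_id x : x \in A -> x \in fibre x.
Proof. by move=> Ax; rewrite inE Ax eqxx. Qed.

Lemma eq_fibre x y : g x = g y -> fibre x = fibre y.
Proof. by move=> gxy; apply/setP => z; rewrite !inE gxy. Qed.

Lemma fibre_gt0 x : x \in A -> (0 < #|fibre x|)%N.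
Proof. by move/fibre_id => Ax; apply/card_gt0P; exists x. Qed.

(* Counting the image with weights: each point of A contributes k / #|fibre|,
   so every value of g is counted exactly k times. *)
Lemma card_imset_weighted (k : nat) :
  (#|g @: A| * k)%:R = \sum_(x in A) (k%:R / #|fibre x|%:R) :> rat.
Proof.
rewrite (partition_big g (mem (g @: A))) /=; last by move=> x Ax; apply: imset_f.
rewrite natrM -sum1_card natr_sum mulr_suml; apply: eq_bigr => _ /imsetP[x Ax ->].
rewrite (eq_bigr (fun _ => k%:R / #|fibre x|%:R)); last first.
  by move=> y /andP[_ /eqP/eq_fibre ->].
rewrite sumr_const.
have -> : #|[pred y | (y \in A) && (g y == g x)]| = #|fibre x|.
  by apply: eq_card => y; rewrite /fibre !inE.
by rewrite mul1r -[_ *+ #|fibre x|]mulr_natr divfK // pnatr_eq0 -lt0n fibre_gt0.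
Qed.

Lemma card_imset_lower (k : nat) : (0 < k)%N ->
  {in A, forall x, #|fibre x| <= k}%N -> (#|A| <= #|g @: A| * k)%N.
Proof.
move=> k_gt0 small; rewrite -(ler_nat rat) card_imset_weighted -sum1_card natr_sum.
apply: ler_sum => x Ax; rewrite ler_pdivlMr ?ltr0n ?fibre_gt0 // mul1r ler_nat.
exact: small.
Qed.

Lemma card_imset_upper (k : nat) (E : {set T}) : (0 < k)%N ->
  {in A, forall x, x \notin E -> #|fibre x| = k} ->
  {in A, forall x, x \in E -> k <= 2 * #|fibre x|}%N ->
  (#|g @: A| * k <= #|A| + #|E|)%N.
Proof.
move=> k_gt0 generic special; rewrite -(ler_nat rat) card_imset_weighted.
apply: le_trans (_ : \sum_(x in A) (1 + (x \in E : nat)%:R) <= _).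
  apply: ler_sum => x Ax; rewrite ler_pdivrMr ?ltr0n ?fibre_gt0 //.
  case: (boolP (x \in E)) => xE /=.
    by rewrite -mulr2n -natrM ler_nat; exact: special.
  by rewrite addr0 mul1r generic.
rewrite big_split /= sumr_const natrD lerD2l -natr_sum ler_nat.
have -> : (\sum_(x in A) (x \in E : nat) = \sum_(x in A | x \in E) 1)%N.
  by rewrite big_mkcondr /=; apply: eq_bigr => x _; case: (x \in E).
rewrite sum1_card.
by apply: subset_leq_card; apply/subsetP => x; rewrite unfold_in => /andP[].
Qed.

Lemma card_imset_exact (k : nat) (x0 : T) : (0 < k)%N -> x0 \in A ->
  {in A, forall x, g x != g x0 -> #|fibre x| = k} ->
  (#|g @: A| * k + #|fibre x0| = k + #|A|)%N.
Proof.
move=> k_gt0 Ax0 generic; have fib_sub : fibre x0 \subset A.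
  by apply/subsetP => x; rewrite inE => /andP[].
have inner : \sum_(x in A :&: fibre x0) k%:R / #|fibre x|%:R = k%:R :> rat.
  rewrite (setIidPr fib_sub) (eq_bigr (fun _ => k%:R / #|fibre x0|%:R)).
    by rewrite sumr_const -[_ *+ #|fibre x0|]mulr_natr divfK // pnatr_eq0 -lt0n fibre_gt0.
  by move=> x; rewrite inE => /andP[_ /eqP/eq_fibre ->].
have outer : \sum_(x in A :\: fibre x0) k%:R / #|fibre x|%:R = #|A :\: fibre x0|%:R :> rat.
  rewrite -sum1_card natr_sum; apply: eq_bigr => x /setDP[Ax].
  by rewrite inE Ax => gx; rewrite generic // divff // pnatr_eq0 -lt0n.
apply/eqP; rewrite -(eqr_nat rat) natrD card_imset_weighted (big_setID (fibre x0)) /=.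
rewrite inner outer -(cardsID (fibre x0) A) (setIidPr fib_sub) !natrD.
by rewrite -addrA [#|fibre x0|%:R + _]addrC.
Qed.

End Fibres.

Lemma card_set3 (T : finType) (a b c : T) : #|[set a; b; c]| = #|[:: a; b; c]|.
Proof. by apply: eq_card => x; rewrite !inE !orbA. Qed.

Lemma card_set4 (T : finType) (a b c d : T) : #|[set a; b; c; d]| = #|[:: a; b; c; d]|.
Proof. by apply: eq_card => x; rewrite !inE !orbA. Qed.

Section HessianAlgebra.
Variable F : fieldType.
Implicit Types u v w z : F.

Definition hessF u : F := u * (u ^+ 3 + 216%:R) / (u ^+ 3 - 27%:R).

(* L_z(u, v) = a + z b + z^2 c for a = uv, b = -3(u + v), c = -18. *)
Definition hessL z u v : F := u * v - 3%:R * z * (u + v) - 18%:R * z ^+ 2.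

(* The norm form a^2 + b^2 + c^2 - ab - bc - ca of the same a, b, c, which
   splits as L_w * L_(w^2) over a primitive cube root of unity w. *)
Definition hessR u v : F :=
  let a := u * v in let b := - (3%:R * (u + v)) in let c := - 18%:R in
  a ^+ 2 + b ^+ 2 + c ^+ 2 - a * b - b * c - c * a.

(* The unique v with L_z(u, v) = 0 (when u != 3z). *)
Definition partner z u : F := (3%:R * z * u + 18%:R * z ^+ 2) / (u - 3%:R * z).

Lemma hessF_eq u v : hess_ok u -> hess_ok v ->
  (hessF u == hessF v) = ((u - v) * hessL 1 u v * hessR u v == 0).
Proof.
rewrite /hess_ok => hu hv; rewrite -subr_eq0.
have -> : hessF u - hessF v =
    (u - v) * hessL 1 u v * hessR u v / ((u ^+ 3 - 27%:R) * (v ^+ 3 - 27%:R)).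
  by rewrite /hessF /hessL /hessR /=; field; rewrite !subr_eq0 hu hv.
set N := _ * hessR u v; have D0 : (u ^+ 3 - 27%:R) * (v ^+ 3 - 27%:R) != 0.
  by rewrite mulf_neq0 // subr_eq0.
by rewrite mulf_eq0 invr_eq0 (negPf D0) orbF.
Qed.

Lemma hessR_split w u v : w ^+ 2 = - w - 1 ->
  hessR u v = hessL w u v * hessL (w ^+ 2) u v.
Proof. by move=> hw; rewrite /hessL /hessR /=; ring: hw. Qed.

(* L_z(u, v) = (u - 3z)(v - partner z u): partner z u is the only root in v. *)
Lemma hessL_partner z u v : u != 3%:R * z -> (hessL z u v == 0) = (v == partner z u).
Proof.
move=> uz; have uz0 : u - 3%:R * z != 0 by rewrite subr_eq0.
have -> : hessL z u v = (u - 3%:R * z) * (v - partner z u).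
  by rewrite /hessL /partner; field.
by rewrite mulf_eq0 (negPf uz0) subr_eq0.
Qed.

Lemma hessL_diag z u : hessL z u u = u ^+ 2 - 6%:R * z * u - 18%:R * z ^+ 2.
Proof. by rewrite /hessL; ring. Qed.

Lemma hessL_diag_char2 z u : (2%:R : F) = 0 -> hessL z u u = u ^+ 2.
Proof.
move=> h2; have h6 : (6%:R : F) = 0 by rewrite (natrM _ 2 3) h2 mul0r.
have h18 : (18%:R : F) = 0 by rewrite (natrM _ 2 9) h2 mul0r.
by rewrite hessL_diag h6 h18 !mul0r !subr0.
Qed.

Lemma partner_fixed z u : u != 3%:R * z -> (partner z u == u) = (hessL z u u == 0).
Proof. by move=> uz; rewrite hessL_partner // eq_sym. Qed.

(* For three cube roots of unity z, z', z'' (so z + z' = -z'' and z z' = z''^2),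
   the z- and z'-partners of u coincide exactly when L_z''(u, u) = 0. *)
Lemma partner_eq z z' z'' u : (3%:R : F) != 0 -> z != z' ->
  u != 3%:R * z -> u != 3%:R * z' -> z + z' = - z'' -> z * z' = z'' ^+ 2 ->
  (partner z u == partner z' u) = (hessL z'' u u == 0).
Proof.
move=> h3 zz' uz uz' sum_z prod_z; rewrite -subr_eq0.
have -> : partner z u - partner z' u = 3%:R * (z - z') *
    (u ^+ 2 + 6%:R * (z + z') * u - 18%:R * (z * z')) / ((u - 3%:R * z) * (u - 3%:R * z')).
  by rewrite /partner; field; rewrite !subr_eq0 uz uz'.
have -> : u ^+ 2 + 6%:R * (z + z') * u - 18%:R * (z * z') = hessL z'' u u.
  by rewrite hessL_diag prod_z -[z'']opprK -sum_z; ring.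
rewrite !mulf_eq0 invr_eq0 !mulf_eq0 !subr_eq0 (negPf h3) (negPf zz') (negPf uz) (negPf uz').
by rewrite /= orbF.
Qed.

Lemma hess_ok_neq z u : z ^+ 3 = 1 -> hess_ok u -> u != 3%:R * z.
Proof.
move=> z3; apply: contraNneq => ->.
by rewrite /hess_ok exprMn z3 mulr1 -natrX.
Qed.

Lemma partner_ok z u : (3%:R : F) != 0 -> z ^+ 3 = 1 -> hess_ok u -> hess_ok (partner z u).
Proof.
move=> h3 z3 hu; have uz := hess_ok_neq z3 hu.
have z0 : z != 0 by apply: contra_eq_neq z3 => ->; rewrite expr0n eq_sym oner_eq0.
have e27 x : (x ^+ 3 == 27%:R) = (x ^+ 3 - 27%:R * z ^+ 3 == 0) by rewrite z3 mulr1 subr_eq0.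
have cube_diff x : x ^+ 3 - 27%:R * z ^+ 3 =
    (x - 3%:R * z) * (x ^+ 2 + 3%:R * z * x + 9%:R * z ^+ 2) by ring.
have Q0 : u ^+ 2 + 3%:R * z * u + 9%:R * z ^+ 2 != 0.
  by apply: contraNneq hu => Q; rewrite /hess_ok e27 cube_diff Q mulr0.
rewrite /hess_ok e27; have -> : partner z u ^+ 3 - 27%:R * z ^+ 3 = (3 ^ 6)%:R * z ^+ 4 *
    (u ^+ 2 + 3%:R * z * u + 9%:R * z ^+ 2) / (u - 3%:R * z) ^+ 3.
  by rewrite /partner; field; rewrite subr_eq0.
by rewrite natrX !mulf_neq0 ?invr_eq0 ?expf_neq0 ?subr_eq0.
Qed.

End HessianAlgebra.

Arguments hessF {F}.

Section FiniteFields.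
Variable F : finFieldType.

Lemma prime_dvd_card r : prime r -> (r %| #|F|)%N = (r%:R == 0 :> F).
Proof.
move=> pr; have [p pp charFp] := finPcharP F.
have cardF : #|F| = (p ^ logn p #|F|)%N := card_pprimeChar charFp.
have logF : (0 < logn p #|F|)%N.
  by rewrite lt0n; apply: contraTneq (finNzRing_gt1 F) => e; rewrite cardF e.
by rewrite -(dvdn_pcharf charFp) cardF Euclid_dvdX // logF andbT !dvdn_prime2.
Qed.

Lemma cube_root_unity_exists : (#|F| %% 3 = 1)%N -> exists w : F, w ^+ 2 = - w - 1.
Proof.
move=> q1; set m := (#|F| %/ 3)%N.
have cardF : #|F| = (3 * m).+1 by rewrite {1}(divn_eq #|F| 3) q1 addn1 mulnC.
have m_gt0 : (0 < m)%N.
  by rewrite lt0n; apply: contraTneq (finNzRing_gt1 F) => m0; rewrite cardF m0.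
(* Otherwise every unit would be a root of X^m - 1, which has only m roots. *)
have [y /andP[y0 ym1] | all_roots] := pickP (fun y : F => (y != 0) && (y ^+ m != 1)).
  exists (y ^+ m); have cube1 : (y ^+ m) ^+ 3 = 1.
    apply: (mulIf y0); rewrite mul1r -exprM -exprSr mulnC -cardF; exact: expf_card.
  have : (y ^+ m - 1) * ((y ^+ m) ^+ 2 + y ^+ m + 1) = 0.
    by rewrite -[RHS](subrr 1) -{3}cube1; ring.
  move/eqP; rewrite mulf_eq0 subr_eq0 (negPf ym1) /= => /eqP h.
  by apply/eqP; rewrite -subr_eq0 -h; apply/eqP; ring.
have Xm1_neq0 : ('X^m - 1 : {poly F}) != 0 by rewrite -size_poly_eq0 size_XnsubC.
have := max_poly_roots Xm1_neq0 (rs := enum [set~ (0 : F)]).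
rewrite enum_uniq size_XnsubC // -cardE cardsC1 cardF /=.
have -> : all (root ('X^m - 1)) (enum [set~ (0 : F)]).
  apply/allP => x; rewrite mem_enum !inE => x0.
  move: (all_roots x); rewrite x0 /= => /negbFE/eqP xm.
  by rewrite rootE !hornerE xm subrr.
by move=> /(_ isT isT); rewrite ltnS; lia.
Qed.

Lemma cube_root_unity_trivial : (#|F| %% 3 = 2)%N -> forall t : F, t ^+ 3 = 1 -> t = 1.
Proof.
move=> q2 t t3; have t0 : t != 0 by apply: contra_eq_neq t3 => ->; rewrite expr0n eq_sym oner_eq0.
have := expf_card t; rewrite (divn_eq #|F| 3) q2 exprD mulnC exprM t3 expr1n mul1r.
by move/(congr1 (fun x => x / t)); rewrite mulfK // divff.
Qed.

Lemma card_quadratic_roots (s t : F) :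
  (#|[set x : F | (x ^+ 2 - s * x - t == 0)%R]| <= 2)%N.
Proof.
have [r root_r | no_root] := pickP (fun x : F => x ^+ 2 - s * x - t == 0); last first.
  by rewrite (_ : [set x | _] = set0) ?cards0 //; apply/setP => x; rewrite !inE no_root.
apply: (@leq_trans #|[set r; s - r]|); last by rewrite cards2; case: (_ != _).
apply/subset_leq_card/subsetP => x; rewrite !inE => root_x.
have : (x - r) * (x - (s - r)) = 0.
  have -> : (x - r) * (x - (s - r)) = (x ^+ 2 - s * x - t) - (r ^+ 2 - s * r - t) by ring.
  by rewrite (eqP root_x) (eqP root_r) subrr.
by move/eqP; rewrite mulf_eq0 !subr_eq0.
Qed.

Definition admissibles : {set F} := [set u | hess_ok u].

Lemma in_admissibles u : (u \in admissibles) = hess_ok u.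
Proof. by rewrite inE. Qed.

Lemma J_H_cubes : J_H F = #|[set x ^+ 3 | x in hessF @: admissibles]|.
Proof.
rewrite /J_H -imset_comp; congr #|pred_of_set _|.
by apply/setP => y; apply/imsetP/imsetP => [][x hx ->]; exists x; rewrite ?inE // in hx *.
Qed.

End FiniteFields.

(* In characteristic 3, jHess u = u^3 and cubing is injective: J_H = q - 1. *)
Lemma J_H_char3 (F : finFieldType) : (3%:R : F) = 0 -> J_H F = (#|F| - 1)%N.
Proof.
move=> h3; have h27 : (27%:R : F) = 0 by rewrite (natrM _ 3 9) h3 mul0r.
have h216 : (216%:R : F) = 0 by rewrite (natrM _ 3 72) h3 mul0r.
have ok (u : F) : hess_ok u = (u != 0) by rewrite /hess_ok h27 expf_eq0.
rewrite /J_H card_in_imset.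
  by rewrite subn1 -(cardsC1 (0 : F)); apply: eq_card => y; rewrite !inE ok.
move=> x y; rewrite !inE !ok => x0 y0.
rewrite /jHess h27 h216 !subr0 !addr0 !mulfK ?expf_neq0 // => e.
have : (x - y) ^+ 3 = 0.
  have -> : (x - y) ^+ 3 = x ^+ 3 - y ^+ 3 - 3%:R * (x * y * (x - y)) by ring.
  by rewrite e h3 subrr mul0r subr0.
by move/eqP; rewrite expf_eq0 subr_eq0 => /andP[_ /eqP].
Qed.

Section TrivialCubeRoots.
Variable F : finFieldType.
Hypothesis h3 : (3%:R : F) != 0.
Hypothesis trivial_root : forall t : F, t ^+ 3 = 1 -> t = 1.
Implicit Types u v x y : F.

Local Notation A := (admissibles F).

Lemma cube_inj : injective (fun x : F => x ^+ 3).
Proof.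
move=> x y /= e; have [y0|y0] := eqVneq y 0.
  by move: e; rewrite y0 expr0n => /eqP; rewrite expf_eq0 => /eqP.
have : (x / y) ^+ 3 = 1 by rewrite expr_div_n e divff // expf_neq0.
by move/trivial_root/(congr1 (fun t => t * y)); rewrite divfK // mul1r.
Qed.

Lemma hess_ok_neq3 u : hess_ok u = (u != 3%:R).
Proof.
rewrite /hess_ok; have -> : (27%:R : F) = 3%:R ^+ 3 by rewrite -natrX.
by rewrite (inj_eq cube_inj).
Qed.

Lemma norm_form_eq0 x y : x ^+ 2 + x * y + y ^+ 2 = 0 -> x = 0 /\ y = 0.
Proof.
move=> e; have [y0|y0] := eqVneq y 0.
  by move: e; rewrite y0 mulr0 expr0n /= !addr0 => /eqP; rewrite expf_eq0 => /andP[_ /eqP].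
have cube1 : (x / y) ^+ 3 = 1.
  apply/eqP; rewrite -subr_eq0.
  have -> : (x / y) ^+ 3 - 1 = (x / y - 1) * (x ^+ 2 + x * y + y ^+ 2) / y ^+ 2 by field.
  by rewrite e mulr0 mul0r.
have xy : x = y by have := trivial_root cube1; move/(congr1 (fun t => t * y)); rewrite divfK // mul1r.
have : 3%:R * y ^+ 2 = 0 by rewrite -e xy; ring.
by move/eqP; rewrite mulf_eq0 expf_eq0 (negPf y0) (negPf h3).
Qed.

(* Zeros of R: the norm form R(u, v) is x^2 + xy + y^2 for
   x = uv + 3(u + v), y = 18 - 3(u + v). *)
Lemma hessR_eq0 u v : hessR u v = 0 -> v = 6%:R - u /\ hessL 1 u u = 0.
Proof.
have -> : hessR u v = (u * v + 3%:R * (u + v)) ^+ 2 +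
    (u * v + 3%:R * (u + v)) * (18%:R - 3%:R * (u + v)) + (18%:R - 3%:R * (u + v)) ^+ 2.
  by rewrite /hessR /=; ring.
move/norm_form_eq0 => [x0 y0].
have v_eq : v = 6%:R - u.
  have : 3%:R * (6%:R - u - v) = 0 by rewrite -y0; ring.
  by move/eqP; rewrite mulf_eq0 (negPf h3) subr_eq0 => /eqP <-; ring.
by split=> //; rewrite -[RHS]oppr0 -x0 v_eq /hessL; ring.
Qed.

(* Each fibre of f consists of u and one more point: 6 - u when L_1(u, u) = 0,
   and the 1-partner of u otherwise. *)
Definition twin u : F := if hessL 1 u u == 0 then 6%:R - u else partner 1 u.

Lemma fibre_twin u : u \in A -> fibre hessF A u = [set u; twin u].
Proof.
rewrite in_admissibles => hu.
have u1 : u != 3%:R * 1 by apply: hess_ok_neq; rewrite ?expr1n.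
have u3 : u != 3%:R by rewrite -hess_ok_neq3.
apply/setP => y; rewrite !inE; apply/idP/idP.
  case/andP => hy; rewrite eq_sym hessF_eq // !mulf_eq0 subr_eq0 eq_sym -orbA.
  case/or3P => [-> // | hL | /eqP/hessR_eq0 [-> L0]]; last by rewrite /twin L0 eqxx /= eqxx orbT.
  move: hL; rewrite hessL_partner // /twin => /eqP ->.
  case: ifP => L0; last by rewrite eqxx orbT.
  by rewrite -partner_fixed // in L0; rewrite L0.
case/orP => /eqP ->; first by rewrite hu eqxx.
rewrite /twin; case: ifPn => L0.
  have hv : hess_ok (6%:R - u).
    rewrite hess_ok_neq3; apply: contra u3 => /eqP e.
    by apply/eqP; rewrite -[u](subKr 6%:R) e; ring.
  rewrite hv eq_sym hessF_eq // (_ : hessR _ _ = hessL 1 u u ^+ 2).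
    by rewrite (eqP L0) expr0n /= mulr0.
  by rewrite /hessR /hessL /=; ring.
have hp : hess_ok (partner 1 u) by apply: partner_ok; rewrite ?expr1n.
have hL : hessL 1 u (partner 1 u) = 0 by apply/eqP; rewrite hessL_partner.
by rewrite hp eq_sym hessF_eq // hL mulr0 mul0r eqxx.
Qed.

Lemma card_fibre_twin u : u \in A ->
  #|fibre hessF A u| = if (2%:R == 0 :> F) && (u == 0) then 1%N else 2%N.
Proof.
rewrite in_admissibles => hu; have u1 : u != 3%:R * 1 by apply: hess_ok_neq; rewrite ?expr1n.
have u3 : u != 3%:R by rewrite -hess_ok_neq3.
rewrite fibre_twin ?in_admissibles // cards2 /twin; case: ifPn => L0.
  have -> : (u == 6%:R - u) = (2%:R == 0 :> F).
    rewrite -subr_eq0 (_ : u - (6%:R - u) = 2%:R * (u - 3%:R)); last by ring.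
    by rewrite mulf_eq0 subr_eq0 (negPf u3) orbF.
  case: (eqVneq (2%:R : F) 0) => h2 //=.
  by move: L0; rewrite hessL_diag_char2 // expf_eq0 => /andP[_ ->].
rewrite eq_sym partner_fixed // (negPf L0) /=.
case: (eqVneq (2%:R : F) 0) => h2 //=; case: (eqVneq u 0) => // u0.
by move: L0; rewrite hessL_diag_char2 // u0 expr0n eqxx.
Qed.

Lemma J_H_trivial_roots : J_H F = (#|F| %/ 2)%N.
Proof.
have A0 : (0 : F) \in A by rewrite in_admissibles hess_ok_neq3 eq_sym.
have cardA : #|A| = (#|F| - 1)%N.
  by rewrite subn1 -(cardsC1 3%:R); apply: eq_card => y; rewrite !inE hess_ok_neq3.
have generic : {in A, forall x, hessF x != hessF 0 -> #|fibre hessF A x| = 2}.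
  move=> x xA gx; rewrite card_fibre_twin //; case: ifP => // /andP[_ /eqP x0].
  by rewrite x0 eqxx in gx.
have := card_imset_exact (k := 2) isT A0 generic.
rewrite J_H_cubes (card_imset _ cube_inj) card_fibre_twin // eqxx andbT cardA.
by have := finNzRing_gt1 F; set s := #|_|; set q := #|F|; case: ifP => _; lia.
Qed.

End TrivialCubeRoots.

Section PrimitiveCubeRoot.
Variable F : finFieldType.
Hypothesis h3 : (3%:R : F) != 0.
Variable w : F.
Hypothesis hw : w ^+ 2 = - w - 1.
Implicit Types u : F.

Local Notation A := (admissibles F).

Lemma w_cube : w ^+ 3 = 1.
Proof. by ring: hw. Qed.

Lemma w2_cube : (w ^+ 2) ^+ 3 = 1.
Proof. by rewrite -exprM mulnC exprM w_cube expr1n. Qed.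

Lemma cube_roots_distinct : [/\ 1 != w, 1 != w ^+ 2 & w != w ^+ 2].
Proof.
have w1 : 1 != w.
  apply: contra h3 => /eqP e; apply/eqP; rewrite -[RHS](subrr (w ^+ 2)) {2}hw -e; ring.
split=> //; apply: contra w1 => /eqP e; apply/eqP; rewrite -w_cube exprS -e.
  by rewrite mulr1.
by rewrite -expr2 -e.
Qed.

(* Admissible parameters are none of 3, 3w, 3w^2, so all partners exist. *)
Lemma admissible_avoid u : u \in A ->
  [/\ u != 3%:R * 1, u != 3%:R * w & u != 3%:R * w ^+ 2].
Proof.
rewrite in_admissibles => hu.
by split; apply: hess_ok_neq => //; [rewrite expr1n | exact: w_cube | exact: w2_cube].
Qed.

(* With R = L_w L_(w^2), the fibre of f through u consists of u and its three
   partners. *)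
Lemma fibre_four u : u \in A ->
  fibre hessF A u = [set u; partner 1 u; partner w u; partner (w ^+ 2) u].
Proof.
move=> uA; have [u1 uw uw2] := admissible_avoid uA.
have hu : hess_ok u by rewrite -in_admissibles.
apply/setP => y; rewrite !inE; case: (boolP (hess_ok y)) => hy /=.
  rewrite eq_sym hessF_eq // (hessR_split _ _ hw) !mulf_eq0 subr_eq0 [u == y]eq_sym -!orbA.
  by rewrite !hessL_partner.
apply/esym/negbTE; apply: contra hy; rewrite -!orbA => /or4P[] /eqP -> //; apply: partner_ok => //.
- by rewrite expr1n.
- exact: w_cube.
- exact: w2_cube.
Qed.

Lemma card_fibre_le4 u : u \in A -> (#|fibre hessF A u| <= 4)%N.
Proof. by move=> uA; rewrite fibre_four // card_set4 card_size. Qed.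

Lemma partner_coincidences u : u \in A ->
  [/\ (partner 1 u == partner w u) = (hessL (w ^+ 2) u u == 0),
      (partner 1 u == partner (w ^+ 2) u) = (hessL w u u == 0) &
      (partner w u == partner (w ^+ 2) u) = (hessL 1 u u == 0)].
Proof.
move=> uA; have [u1 uw uw2] := admissible_avoid uA.
have [d1 d2 d3] := cube_roots_distinct.
by split; apply: partner_eq => //; ring: hw.
Qed.

Definition exceptional : {set F} :=
  [set u | [|| hessL 1 u u == 0, hessL w u u == 0 | hessL (w ^+ 2) u u == 0]].

Lemma card_fibre_generic u : u \in A -> u \notin exceptional ->
  #|fibre hessF A u| = 4%N.
Proof.
move=> uA; rewrite inE !negb_or => /and3P[L1 Lw Lw2].
have [u1 uw uw2] := admissible_avoid uA.
have [p1w p1w2 pww2] := partner_coincidences uA.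
rewrite fibre_four // card_set4; apply/card_uniqP; rewrite /= !inE !negb_or.
by rewrite ![u == _]eq_sym !partner_fixed // p1w p1w2 pww2 L1 Lw Lw2.
Qed.

(* Outside characteristic 2, u is never fixed by all three partners, so every
   fibre has at least two points. *)
Lemma card_fibre_ge2 u : (2%:R : F) != 0 -> u \in A -> (1 < #|fibre hessF A u|)%N.
Proof.
move=> h2 uA; have [u1 uw uw2] := admissible_avoid uA.
have [z zroot nz] : exists2 z, z \in [:: 1; w; w ^+ 2] & partner z u != u.
  case: (boolP (partner 1 u != u)) => [n1|]; first by exists 1; rewrite ?inE ?eqxx.
  case: (boolP (partner w u != u)) => [nw|]; first by exists w; rewrite // !inE eqxx orbT.
  case: (boolP (partner (w ^+ 2) u != u)) => [nw2|].
    by exists (w ^+ 2); rewrite // !inE eqxx !orbT.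
  rewrite !negbK !partner_fixed // => /eqP L2 /eqP Lw /eqP L1; exfalso.
  have sum_diag : hessL 1 u u + hessL w u u + hessL (w ^+ 2) u u = 3%:R * u ^+ 2.
    by rewrite !hessL_diag; ring: hw.
  have u0 : u = 0.
    move: sum_diag; rewrite L1 Lw L2 !addr0 => /esym/eqP.
    by rewrite mulf_eq0 (negPf h3) expf_eq0 => /andP[_ /eqP].
  have h18 : (18%:R : F) != 0 by rewrite (natrM _ 2 9) (natrM _ 3 3) !mulf_neq0.
  move: L1; rewrite hessL_diag u0 expr0n /= !mulr0 subr0 sub0r expr1n mulr1 => /eqP.
  by rewrite oppr_eq0 (negPf h18).
apply/card_gt1P; exists u, (partner z u); rewrite fibre_four //.
split; [by rewrite !inE eqxx | | by rewrite eq_sym].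
by move: zroot; rewrite !inE => /or3P[] /eqP ->; rewrite eqxx ?orbT.
Qed.

(* Each L_z(u, u) is a quadratic in u, so there are at most 6 exceptional u. *)
Lemma card_exceptional : (#|exceptional| <= 6)%N.
Proof.
have diag z : (#|[set u : F | (hessL z u u == 0)%R]| <= 2)%N.
  rewrite (eq_card (B := [set u : F | (u ^+ 2 - (6%:R * z) * u - 18%:R * z ^+ 2 == 0)%R])).
    exact: card_quadratic_roots.
  by move=> u; rewrite !inE hessL_diag mulrA.
have -> : exceptional = [set u | hessL 1 u u == 0] :|: [set u | hessL w u u == 0]
    :|: [set u | hessL (w ^+ 2) u u == 0] by apply/setP => u; rewrite !inE orbA.
apply: leq_trans (leq_card_setU _ _) _; rewrite (_ : 6 = 4 + 2)%N //.
apply: leq_add (diag _); apply: leq_trans (leq_card_setU _ _) _.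
exact: leq_add (diag _) (diag _).
Qed.

(* The three non-admissible values are 3, 3w and 3w^2. *)
Lemma card_admissibles : (#|A| + 3 = #|F|)%N.
Proof.
have [d1 d2 d3] := cube_roots_distinct.
have compl : ~: A = [set 3%:R * 1; 3%:R * w; 3%:R * w ^+ 2].
  apply/setP => y; rewrite !inE negbK -subr_eq0.
  have -> : y ^+ 3 - 27%:R = (y - 3%:R * 1) * (y - 3%:R * w) * (y - 3%:R * w ^+ 2).
    by ring: hw.
  by rewrite !mulf_eq0 !subr_eq0 -orbA.
rewrite -(cardsC A) compl card_set3; congr (_ + _)%N; apply/esym/card_uniqP.
by rewrite /= !inE !(inj_eq (mulfI h3)) negb_or d1 d2 d3.
Qed.

Lemma admissible0 : (0 : F) \in A.
Proof. by rewrite in_admissibles /hess_ok expr0n eq_sym -[27%N]/(3 ^ 3)%N natrX expf_neq0. Qed.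

(* f(w u) = w f(u), so f(A) is stable under w, and cubing is 3-to-1 on
   f(A) \ {0}. *)
Lemma card_cubes :
  (#|[set x ^+ 3 | x in hessF @: A]| * 3 + 1 = 3 + #|hessF @: A|)%N.
Proof.
set S := hessF @: A; have [d1 d2 d3] := cube_roots_distinct.
have S0 : (0 : F) \in S by apply/imsetP; exists 0; rewrite ?admissible0 // /hessF !mul0r.
have Sw s : s \in S -> w * s \in S.
  case/imsetP => u uA ->; apply/imsetP; exists (w * u).
    by move: uA; rewrite !in_admissibles /hess_ok exprMn w_cube mul1r.
  by rewrite /hessF exprMn w_cube mul1r !mulrA.
have fib s : s \in S -> fibre (fun x => x ^+ 3) S s = [set 1 * s; w * s; w ^+ 2 * s].
  move=> sS; apply/setP => y; rewrite !inE mul1r -subr_eq0.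
  have -> : y ^+ 3 - s ^+ 3 = (y - s) * (y - w * s) * (y - w ^+ 2 * s) by ring: hw.
  rewrite !mulf_eq0 !subr_eq0 -!orbA andb_idl // => /or3P[] /eqP -> //; first exact: Sw.
  by rewrite expr2 -mulrA; apply/Sw/Sw.
have generic : {in S, forall s, s ^+ 3 != 0 ^+ 3 -> #|fibre (fun x => x ^+ 3) S s| = 3}.
  move=> s sS; rewrite expr0n expf_eq0 /= => s0.
  rewrite fib // card_set3; apply/card_uniqP.
  by rewrite /= !inE !(inj_eq (mulIf s0)) negb_or d1 d2 d3.
have := card_imset_exact (k := 3) isT S0 generic.
rewrite fib // !mulr0.
by rewrite (_ : [set 0; 0; 0] = [set 0 : F]) ?cards1 //; apply/setP => y; rewrite !inE !orbb.
Qed.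

(* In characteristic 2 every fibre has four points, except {0}. *)
Lemma card_image_char2 : (2%:R : F) = 0 -> (#|hessF @: A| * 4 + 1 = 4 + #|A|)%N.
Proof.
move=> h2; have A0 := admissible0.
have generic : {in A, forall u, hessF u != hessF 0 -> #|fibre hessF A u| = 4}.
  move=> u uA gu; apply: card_fibre_generic => //.
  by rewrite inE !hessL_diag_char2 // !orbb expf_eq0 /=; apply: contra gu => /eqP ->.
have fib0 : fibre hessF A 0 = [set 0].
  have p0 (z : F) : partner z 0 = 0 by rewrite /partner mulr0 add0r (natrM _ 2 9) h2 !mul0r.
  by rewrite (fibre_four A0) !p0; apply/setP => y; rewrite !inE !orbb.
by have := card_imset_exact (k := 4) isT A0 generic; rewrite fib0 cards1.
Qed.

(* Otherwise fibres have four points off the exceptional set, and between two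
   and four points everywhere. *)
Lemma card_image_bounds : (2%:R : F) != 0 ->
  (#|A| <= #|hessF @: A| * 4 <= #|A| + 6)%N.
Proof.
move=> h2; apply/andP; split.
  by apply: card_imset_lower => // u uA; exact: card_fibre_le4.
apply: leq_trans (card_imset_upper (E := exceptional) _ _ _) _ => //.
- by move=> u uA; exact: card_fibre_generic.
- move=> u uA _; have := card_fibre_ge2 h2 uA.
  by rewrite -[4%N]/(2 * 2)%N leq_pmul2l.
- by rewrite leq_add2l card_exceptional.
Qed.

Lemma J_H_primitive_root : J_H F = ((#|F| + 11) %/ 12)%N.
Proof.
rewrite J_H_cubes; have cubes := card_cubes; have cardA := card_admissibles.
have [h2 | h2] := eqVneq (2%:R : F) 0.
  by have := card_image_char2 h2; lia.
by have := card_image_bounds h2; lia.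
Qed.

End PrimitiveCubeRoot.

Theorem mainTheorem12 (F : finFieldType) : J_H F = J_H_formula #|F|.
Proof.
rewrite /J_H_formula.
have [h3 | h3] := eqVneq (3%:R : F) 0.
  by rewrite -/(dvdn 3 #|F|) prime_dvd_card // h3 eqxx J_H_char3.
have [q_mod | q_mod] : (#|F| %% 3 = 1 \/ #|F| %% 3 = 2)%N.
  have : (#|F| %% 3 != 0)%N by rewrite -/(dvdn 3 #|F|) prime_dvd_card.
  have : (#|F| %% 3 < 3)%N by rewrite ltn_mod.
  lia.
- have [w hw] := cube_root_unity_exists q_mod.
  by rewrite q_mod /=; apply: (J_H_primitive_root h3 hw).
- by rewrite q_mod; exact/J_H_trivial_roots/cube_root_unity_trivial.
Qed.
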